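(* Let $\alpha\in(0,1)\cup(1,2]$ and let $\Phi_{AB}=|\Phi\rangle\langle\Phi|$ with $|\Phi\rangle_{AB}=\frac{1}{\sqrt d}\sum_{i=0}^{d-1}|i\rangle_A|i\rangle_B$ a maximally entangled state of Schmidt rank $d$ (for orthonormal sets $\{|i\rangle_A\}$, $\{|i\rangle_B\}$). Then $E^{\mathrm{sq}}_\alpha(A;B)_\Phi=\log d$.
   Context: All Hilbert spaces are finite-dimensional and $\log$ is the natural logarithm. For a positive semi-definite $M$ and function $f$, $f(M)$ applies $f$ only to nonzero eigenvalues (negative powers are generalized inverses). For a state $\rho_{ABE}$ and $\alpha\in(0,1)\cup(1,\infty)$, $$I_\alpha(A;B|E)_\rho=\frac{\alpha}{\alpha-1}\log\mathrm{Tr}\Big\{\Big(\rho_E^{(\alpha-1)/2}\,\mathrm{Tr}_A\big\{\rho_{AE}^{(1-\alpha)/2}\rho_{ABE}^{\alpha}\rho_{AE}^{(1-\alpha)/2}\big\}\,\rho_E^{(\alpha-1)/2}\Big)^{1/\alpha}\Big\}.$$ The Rényi squashed entanglement is $E^{\mathrm{sq}}_\alpha(A;B)_\rho=\frac12\inf\{I_\alpha(A;B|E)_\omega:\ \mathrm{Tr}_E\omega_{ABE}=\rho_{AB}\}$ over all extensions on finite-dimensional $\mathcal{H}_E$. *)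

From HB Require Import structures.
From mathcomp Require Import all_boot all_order all_algebra.
From mathcomp Require Import boolp classical_sets reals ereal exp.
From mathcomp Require Import complex mxtens.

Set Implicit Arguments.
Unset Strict Implicit.
Unset Printing Implicit Defensive.

Import Order.TTheory GRing.Theory Num.Theory.
Local Open Scope ring_scope.
Local Open Scope complex_scope.

Section QInfo.
Variable R : realType.
Local Notation C := R[i].

Definition adjmx m n (M : 'M[C]_(m, n)) : 'M[C]_(n, m) := (map_mx (@conjc R) M)^T.

Definition unitarymx n (U : 'M[C]_n) : Prop := U *m adjmx U = 1%:M.

Definition psdmx n (M : 'M[C]_n) : Prop :=
  adjmx M = M /\ forall v : 'cV[C]_n, 0 <= (adjmx v *m M *m v) 0 0.

Definition densitymx n (M : 'M[C]_n) : Prop := psdmx M /\ \tr M = 1.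

Definition psd_decomp n (M : 'M[C]_n) (p : 'M[C]_n * 'rV[R]_n) : Prop :=
  unitarymx p.1 /\ (forall i, 0 <= p.2 0 i) /\
  M = p.1 *m diag_mx (map_mx (fun x => x%:C) p.2) *m adjmx p.1.

(* f(M) for PSD M: f applied only to nonzero eigenvalues (zero eigenvalues
   are sent to 0); the result does not depend on the chosen decomposition. *)
Definition mxfun (f : R -> R) n (M : 'M[C]_n) : 'M[C]_n :=
  match pselect (exists p, psd_decomp M p) with
  | left H => let p := projT1 (cid H) in
      p.1 *m diag_mx (map_mx (fun x => (if x == 0 then 0 else f x)%:C) p.2)
          *m adjmx p.1
  | right _ => 0
  end.

(* M^s, with negative powers being generalized inverses *)
Definition mxpow n (M : 'M[C]_n) (s : R) : 'M[C]_n := mxfun (fun x => powR x s) M.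

(* Tensor index of (a,b,e) in H_A (x) H_B (x) H_E, ordered as ((A,B),E). *)
Definition idx3 a b e (i : 'I_a) (j : 'I_b) (k : 'I_e) : 'I_(a * b * e) :=
  mxtens_index (mxtens_index (i, j), k).

Definition ptrE a b e (w : 'M[C]_(a * b * e)) : 'M[C]_(a * b) :=
  \matrix_(x, y) \sum_(k < e) w (mxtens_index (x, k)) (mxtens_index (y, k)).

Definition ptrB_ABE a b e (w : 'M[C]_(a * b * e)) : 'M[C]_(a * e) :=
  \matrix_(x, y) \sum_(j < b)
     w (idx3 (mxtens_unindex x).1 j (mxtens_unindex x).2)
       (idx3 (mxtens_unindex y).1 j (mxtens_unindex y).2).

Definition ptrAB_ABE a b e (w : 'M[C]_(a * b * e)) : 'M[C]_e :=
  \matrix_(k, k') \sum_(x < a * b) w (mxtens_index (x, k)) (mxtens_index (x, k')).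

Definition ptrA_ABE a b e (w : 'M[C]_(a * b * e)) : 'M[C]_(b * e) :=
  \matrix_(x, y) \sum_(i < a)
     w (idx3 i (mxtens_unindex x).1 (mxtens_unindex x).2)
       (idx3 i (mxtens_unindex y).1 (mxtens_unindex y).2).

(* M_{AE} (x) 1_B as an operator on ABE *)
Definition extAE_ABE a b e (M : 'M[C]_(a * e)) : 'M[C]_(a * b * e) :=
  \matrix_(x, y)
    let: (ij, k) := mxtens_unindex x in let: (i, j) := mxtens_unindex ij in
    let: (ij', k') := mxtens_unindex y in let: (i', j') := mxtens_unindex ij' in
    (j == j')%:R * M (mxtens_index (i, k)) (mxtens_index (i', k')).

Definition extE_BE b e (M : 'M[C]_e) : 'M[C]_(b * e) :=
  \matrix_(x, y)
    let: (j, k) := mxtens_unindex x in let: (j', k') := mxtens_unindex y in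
    (j == j')%:R * M k k'.

Definition renyiCMI (alpha : R) a b e (w : 'M[C]_(a * b * e)) : R :=
  let wAE := ptrB_ABE w in
  let wE := ptrAB_ABE w in
  let sAE := extAE_ABE b (mxpow wAE ((1 - alpha) / 2)) in
  let inner := ptrA_ABE (sAE *m mxpow w alpha *m sAE) in
  let sE := extE_BE b (mxpow wE ((alpha - 1) / 2)) in
  alpha / (alpha - 1) * ln (complex.Re (\tr (mxpow (sE *m inner *m sE) (alpha^-1)))).

Definition renyi_sq_ent (alpha : R) a b (rho : 'M[C]_(a * b)) : \bar R :=
  ((2^-1)%:E * ereal_inf [set x : \bar R | exists (e : nat) (w : 'M[C]_(a * b * e)),
      densitymx w /\ ptrE w = rho /\ x = (renyiCMI alpha w)%:E])%E.

Definition kronv a b (u : 'cV[C]_a) (v : 'cV[C]_b) : 'cV[C]_(a * b) :=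
  \col_x (u (mxtens_unindex x).1 0 * v (mxtens_unindex x).2 0).

Definition orthonormal_vecs a d (f : 'I_d -> 'cV[C]_a) : Prop :=
  forall i j, adjmx (f i) *m f j = ((i == j)%:R)%:M.

Definition max_ent_vec a b d (fa : 'I_d -> 'cV[C]_a) (fb : 'I_d -> 'cV[C]_b)
  : 'cV[C]_(a * b) :=
  ((Num.sqrt (d%:R : R))^-1)%:C *: \sum_(i < d) kronv (fa i) (fb i).

End QInfo.

From Pilot Require Import Defs.
From HB Require Import structures.
From mathcomp Require Import all_boot all_order all_algebra.
From mathcomp Require Import boolp classical_sets reals ereal exp.
From mathcomp Require Import complex mxtens.
From mathcomp Require Import ring.

Import Order.TTheory GRing.Theory Num.Theory.
Local Open Scope ring_scope.

(* Every extension w_ABE of the pure state Phi = |phi><phi| is a product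
   Phi (x) sigma_E.  Both one-party marginals of Phi are P/d for rank-d
   projectors P, so for w = Phi (x) sigma each matrix power occurring in
   I_alpha(A;B|E)_w is a power of d times a projector tensored with a power of
   sigma.  The powers of sigma cancel: the operator raised to 1/alpha is
   d^(alpha-2) P_B (x) sigma^alpha, its 1/alpha-th power has trace
   d^(2(alpha-1)/alpha), and I_alpha(A;B|E)_w = 2 log d for every extension. *)

Section RenyiSquashedMaxEnt.
Set Implicit Arguments.
Unset Strict Implicit.
Unset Printing Implicit Defensive.
Local Open Scope complex_scope.

Lemma sum_mxtens (V : nmodType) m n (F : 'I_(m * n) -> V) :
  \sum_(x < m * n) F x = \sum_(i < m) \sum_(j < n) F (mxtens_index (i, j)).
Proof.
rewrite pair_big /=; apply: reindex => /=.
by exists (@mxtens_unindex m n) => x _; rewrite (mxtens_indexK, mxtens_unindexK) //; case: x.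
Qed.

Lemma mxtens_index_eq m n (i i' : 'I_m) (j j' : 'I_n) :
  (mxtens_index (i, j) == mxtens_index (i', j')) = (i == i') && (j == j').
Proof.
apply/eqP/andP => [/(congr1 (@mxtens_unindex m n))|[/eqP-> /eqP->]] //.
by rewrite !mxtens_indexK => -[-> ->].
Qed.

Lemma mxtensP T m n p q (A B : 'M[T]_(m * n, p * q)) :
  (forall i j k l, A (mxtens_index (i, j)) (mxtens_index (k, l)) =
                   B (mxtens_index (i, j)) (mxtens_index (k, l))) -> A = B.
Proof.
move=> eqAB; apply/matrixP => x y.
by case: (mxtens_indexP x) => i j; case: (mxtens_indexP y) => k l.
Qed.

Variable R : realType.
Local Notation C := R[i].

Lemma adjmxE m n (M : 'M[C]_(m, n)) i j : adjmx M i j = (M j i)^*.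
Proof. by rewrite /adjmx !mxE. Qed.

Lemma adjmxK m n (M : 'M[C]_(m, n)) : adjmx (adjmx M) = M.
Proof. by apply/matrixP => i j; rewrite !adjmxE conjcK. Qed.

Lemma adjmxM m n p (A : 'M[C]_(m, n)) (B : 'M[C]_(n, p)) :
  adjmx (A *m B) = adjmx B *m adjmx A.
Proof.
apply/matrixP => i j; rewrite !mxE rmorph_sum; apply: eq_bigr => k _.
by rewrite !adjmxE rmorphM mulrC.
Qed.

Lemma adjmxD m n (A B : 'M[C]_(m, n)) : adjmx (A + B) = adjmx A + adjmx B.
Proof. by apply/matrixP => i j; rewrite !mxE rmorphD. Qed.

Lemma adjmxZ m n c (A : 'M[C]_(m, n)) : adjmx (c *: A) = conjc c *: adjmx A.
Proof. by apply/matrixP => i j; rewrite !mxE rmorphM. Qed.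

Lemma adjmx_sum m n I (r : seq I) (F : I -> 'M[C]_(m, n)) :
  adjmx (\sum_(i <- r) F i) = \sum_(i <- r) adjmx (F i).
Proof.
elim/big_rec2: _ => [|i x y _ <-]; last by rewrite adjmxD.
by apply/matrixP => i j; rewrite !mxE rmorph0.
Qed.

Lemma adjmx1 n : adjmx (1%:M : 'M[C]_n) = 1%:M.
Proof. by apply/matrixP => i j; rewrite !mxE eq_sym; case: eqP; rewrite ?rmorph0 ?rmorph1. Qed.

Lemma adjmx_tens m n p q (A : 'M[C]_(m, n)) (B : 'M[C]_(p, q)) :
  adjmx (A *t B) = adjmx A *t adjmx B.
Proof. by rewrite /adjmx map_mxT trmx_tens. Qed.

Lemma unitarymx_adjl n (U : 'M[C]_n) : Defs.unitarymx U -> adjmx U *m U = 1%:M.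
Proof. exact: mulmx1C. Qed.

Definition diag_fun n (G : R -> R) (l : 'rV[R]_n) : 'M[C]_n :=
  diag_mx (map_mx (fun x => (G x)%:C) l).

Lemma diag_funE n G (l : 'rV[R]_n) i j : diag_fun G l i j = (G (l 0 i))%:C *+ (i == j).
Proof. by rewrite !mxE. Qed.

Lemma eq_diag_fun n (G1 G2 : R -> R) (l : 'rV[R]_n) :
  (forall i, G1 (l 0 i) = G2 (l 0 i)) -> diag_fun G1 l = diag_fun G2 l.
Proof. by move=> eqG; apply/matrixP => i j; rewrite !diag_funE eqG. Qed.

Lemma diag_fun_map n (G H : R -> R) (l : 'rV[R]_n) :
  diag_fun G (\row_i H (l 0 i)) = diag_fun (G \o H) l.
Proof. by apply/matrixP => i j; rewrite !diag_funE mxE. Qed.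

Lemma diag_funZ n (G : R -> R) k (l : 'rV[R]_n) :
  diag_fun G (k *: l) = diag_fun (fun x => G (k * x)) l.
Proof. by apply/matrixP => i j; rewrite !diag_funE mxE. Qed.

Lemma scale_diag_fun n c (G : R -> R) (l : 'rV[R]_n) :
  c%:C *: diag_fun G l = diag_fun (fun x => c * G x) l.
Proof.
apply/matrixP => i j; rewrite !mxE.
by case: (i == j); rewrite ?mulr1n ?mulr0n ?mulr0 //= rmorphM.
Qed.

Lemma adjmx_diag_fun n G (l : 'rV[R]_n) : adjmx (diag_fun G l) = diag_fun G l.
Proof.
apply/matrixP => i j; rewrite adjmxE !diag_funE eq_sym.
by case: eqP => [->|_]; rewrite ?conjc_real ?mulr0n ?rmorph0.
Qed.

Lemma mul_diag_fun n G1 G2 (l : 'rV[R]_n) :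
  diag_fun G1 l *m diag_fun G2 l = diag_fun (fun x => G1 x * G2 x) l.
Proof.
rewrite mul_diag_mx; apply/matrixP => i j; rewrite !mxE.
by case: eqP => _; rewrite ?mulr1n ?mulr0n ?mulr0 //= -rmorphM.
Qed.

Lemma quad_diag_fun n (l : 'rV[R]_n) (w : 'cV[C]_n) :
  (adjmx w *m diag_fun id l *m w) 0 0 = \sum_i (l 0 i)%:C * (w i 0 * (w i 0)^*).
Proof.
rewrite mul_mx_diag !mxE; apply: eq_bigr => i _; rewrite !mxE.
by ring.
Qed.


Lemma psd_decomp_psdmx n (M : 'M[C]_n) p : psd_decomp M p -> psdmx M.
Proof.
case: p => U l [/= _ [l_ge0 ->]]; split.
  by rewrite !adjmxM adjmxK [adjmx (diag_mx _)](adjmx_diag_fun id) mulmxA.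
move=> v; rewrite -!mulmxA mulmxA -[adjmx v *m U]adjmxK adjmxM adjmxK.
rewrite mulmxA (quad_diag_fun l (adjmx U *m v)).
by apply: sumr_ge0 => i _; rewrite mulr_ge0 ?lecR ?mul_conjC_ge0.
Qed.

Lemma trmxC_adjmx m n (A : 'M[C]_(m, n)) : (A ^t* )%sesqui = adjmx A.
Proof. by rewrite /adjmx map_trmx. Qed.

Lemma psdmx_decomp n (M : 'M[C]_n) : psdmx M -> exists p, psd_decomp M p.
Proof.
move=> [M_herm M_quad].
have M_normal : M \is normalmx by apply/eqP; rewrite !trmxC_adjmx M_herm.
have := orthomx_spectralP M_normal.
set S := spectralmx M; set sp := spectral_diag M => MS.
have S_unitary : S *m adjmx S = 1%:M.
  by rewrite -trmxC_adjmx; apply/unitarymxP/spectral_unitarymx.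
have S_unitaryl : adjmx S *m S = 1%:M by apply: mulmx1C.
rewrite invmx_unitary ?spectral_unitarymx // trmxC_adjmx in MS.
pose e i : 'cV[C]_n := adjmx S *m delta_mx i 0.
have spE i : sp 0 i = (adjmx (e i) *m M *m e i) 0 0.
  rewrite /e MS adjmxM adjmxK !mulmxA -(mulmxA _ S (adjmx S)) S_unitary mulmx1.
  rewrite -(mulmxA _ S (adjmx S)) S_unitary mulmx1 mul_mx_diag !mxE (bigD1 i) //=.
  rewrite big1 => [|j /negPf ji]; last by rewrite !mxE ji mulr0.
  by rewrite !mxE !eqxx /= rmorph1 mulr1 addr0 oppr0 mul1r.
have sp_real i : sp 0 i = (complex.Re (sp 0 i))%:C /\ 0 <= complex.Re (sp 0 i).
  have : 0 <= sp 0 i by rewrite spE M_quad.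
  by case: (sp 0 i) => x y; rewrite lecE /= => /andP[/eqP -> ->].
exists (adjmx S, \row_i complex.Re (sp 0 i)); split => /=.
  by rewrite /Defs.unitarymx adjmxK.
split; first by move=> i; rewrite mxE; case: (sp_real i).
rewrite adjmxK {1}MS; congr (_ *m diag_mx _ *m _).
by apply/matrixP => i j; rewrite ord1 !mxE; case: (sp_real j).
Qed.

(* The functional calculus does not depend on the spectral decomposition: a
   unitary intertwining two diagonalisations also intertwines any function of
   the eigenvalues. *)
Lemma psd_decomp_diag_fun_uniq G n (M : 'M[C]_n) p q :
  psd_decomp M p -> psd_decomp M q ->
  p.1 *m diag_fun G p.2 *m adjmx p.1 = q.1 *m diag_fun G q.2 *m adjmx q.1.
Proof.
case: p => U l [/= U_unitary [_ MU]]; case: q => V m [/= V_unitary [_ MV]].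
have Ul := unitarymx_adjl U_unitary; have Vl := unitarymx_adjl V_unitary.
set W := adjmx V *m U.
have VW : V *m W = U by rewrite /W mulmxA V_unitary mul1mx.
have WU : W *m adjmx U = adjmx V by rewrite /W -mulmxA U_unitary mulmx1.
have W_id : W *m diag_fun id l = diag_fun id m *m W.
  have : adjmx V *m M *m U = adjmx V *m M *m U by [].
  rewrite {1}MU {1}MV !mulmxA Vl mul1mx -!mulmxA Ul mulmx1 -/W.
  by rewrite !mulmxA.
clearbody W.
have W_G : W *m diag_fun G l = diag_fun G m *m W.
  apply/matrixP => i j; move/matrixP: W_id => /(_ i j).
  rewrite !mul_mx_diag !mul_diag_mx !mxE.
  have [->|Wij_neq0] := eqVneq (W i j) 0; first by move=> _; rewrite mulr0 mul0r.
  move=> /eqP; rewrite mulrC -subr_eq0 -mulrBl mulf_eq0 (negPf Wij_neq0) orbF.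
  by rewrite subr_eq0 => /eqP/(congr1 (@complex.Re R)) /= ->; rewrite mulrC.
by rewrite -{1}VW -(mulmxA V W) W_G mulmxA -(mulmxA _ W) WU.
Qed.

Definition nz_fun (f : R -> R) (x : R) : R := if x == 0 then 0 else f x.

Lemma mxfun_psd_decomp f n (M : 'M[C]_n) p : psd_decomp M p ->
  mxfun f M = p.1 *m diag_fun (nz_fun f) p.2 *m adjmx p.1.
Proof.
move=> Mp; rewrite /mxfun; case: pselect => [Mex|[]]; last by exists p.
exact: (psd_decomp_diag_fun_uniq (nz_fun f) (projT2 (cid Mex)) Mp).
Qed.

Lemma tensmx11 m n : (1%:M : 'M[C]_m) *t (1%:M : 'M[C]_n) = 1%:M.
Proof.
apply: mxtensP => i j k l; rewrite tensmxE !mxE mxtens_index_eq.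
by case: (i == k); case: (j == l); rewrite ?mulr1 ?mulr0.
Qed.

Lemma tensmxZl m n p q c (A : 'M[C]_(m, n)) (B : 'M[C]_(p, q)) :
  (c *: A) *t B = c *: (A *t B).
Proof. by apply/matrixP => x y; rewrite !mxE mulrA. Qed.

Lemma tensmxZr m n p q c (A : 'M[C]_(m, n)) (B : 'M[C]_(p, q)) :
  A *t (c *: B) = c *: (A *t B).
Proof. by apply/matrixP => x y; rewrite !mxE mulrCA. Qed.

Lemma mxtrace_tens m n (A : 'M[C]_m) (B : 'M[C]_n) : \tr (A *t B) = \tr A * \tr B.
Proof.
rewrite /mxtrace sum_mxtens mulr_suml; apply: eq_bigr => i _.
by rewrite mulr_sumr; apply: eq_bigr => j _; rewrite tensmxE.
Qed.

Lemma unitarymx_tens m n (U : 'M[C]_m) (V : 'M[C]_n) :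
  Defs.unitarymx U -> Defs.unitarymx V -> Defs.unitarymx (U *t V).
Proof. by move=> U1 V1; rewrite /Defs.unitarymx adjmx_tens tensmx_mul U1 V1 tensmx11. Qed.

Definition tensrow m n (l : 'rV[R]_m) (s : 'rV[R]_n) : 'rV[R]_(m * n) :=
  \row_x (l 0 (mxtens_unindex x).1 * s 0 (mxtens_unindex x).2).

Lemma diag_fun_tens m n G G1 G2 (l : 'rV[R]_m) (s : 'rV[R]_n) :
  (forall i j, G (l 0 i * s 0 j) = G1 (l 0 i) * G2 (s 0 j)) ->
  diag_fun G (tensrow l s) = diag_fun G1 l *t diag_fun G2 s.
Proof.
move=> Gl; apply: mxtensP => i j k l'; rewrite tensmxE !diag_funE mxtens_index_eq !mxE.
rewrite mxtens_indexK /= Gl.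
by case: (i == k); case: (j == l'); rewrite ?mulr1n ?mulr0n ?mulr0 ?mul0r // rmorphM.
Qed.

Lemma psd_decomp_tens m n (A : 'M[C]_m) (B : 'M[C]_n) U l V s :
  psd_decomp A (U, l) -> psd_decomp B (V, s) ->
  psd_decomp (A *t B) (U *t V, tensrow l s).
Proof.
move=> [/= U1 [l_ge0 ->]] [/= V1 [s_ge0 ->]]; split => /=; first exact: unitarymx_tens.
split; first by move=> x; rewrite mxE mulr_ge0.
have := @diag_fun_tens m n id id id l s (fun _ _ => erefl); rewrite /diag_fun => ->.
by rewrite adjmx_tens !tensmx_mul.
Qed.

Lemma psd_decompZ n (P : 'M[C]_n) W p k : 0 < k -> psd_decomp P (W, p) ->
  psd_decomp (k%:C *: P) (W, k *: p).
Proof.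
move=> k_gt0 [/= W1 [p_ge0 ->]]; split => //=; split.
  by move=> i; rewrite mxE (mulr_ge0 (ltW k_gt0)).
have := diag_funZ id k p; rewrite -scale_diag_fun /diag_fun => ->.
by rewrite scalemxAl scalemxAr.
Qed.

Lemma proj_psd_decomp_eigen n (P : 'M[C]_n) W p :
  psd_decomp P (W, p) -> P *m P = P -> forall i, p 0 i = 0 \/ p 0 i = 1.
Proof.
move=> [/= W1 [_ PW]] PP i.
have Wl := unitarymx_adjl W1.
have : adjmx W *m (P *m P) *m W = adjmx W *m P *m W by rewrite PP.
rewrite PW !mulmxA Wl mul1mx -!(mulmxA _ (adjmx W) W) !Wl !mulmx1.
move/matrixP => /(_ i i); rewrite mul_mx_diag !mxE eqxx mulr1n.
move=> /(congr1 (@complex.Re R)) /=; rewrite mulr0 subr0 => pp.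
have : p 0 i * (p 0 i - 1) = 0 by rewrite mulrBr mulr1 pp subrr.
by move/eqP; rewrite mulf_eq0 subr_eq0 => /orP[/eqP|/eqP]; [left|right].
Qed.

(* The factor k only rescales the eigenvalues 0 and 1 of the projector P, so
   it can be pushed into the function applied to T. *)
Lemma mxfun_scale_proj_tens f m n (P : 'M[C]_m) (T : 'M[C]_n) k W p V t :
  psd_decomp P (W, p) -> P *m P = P -> psd_decomp T (V, t) -> 0 < k ->
  mxfun f ((k%:C *: P) *t T) =
  P *t (V *m diag_fun (nz_fun (fun x => f (k * x))) t *m adjmx V).
Proof.
move=> PW PP TV k_gt0; have p01 := proj_psd_decomp_eigen PW PP.
have k_neq0 : k != 0 by rewrite gt_eqF.
have kK x : k * x / k = x by rewrite mulrAC mulfV // mul1r.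
rewrite (mxfun_psd_decomp f (psd_decomp_tens (psd_decompZ k_gt0 PW) TV)) /=.
rewrite (@diag_fun_tens _ _ _ (fun x => x / k) (nz_fun (fun x => f (k * x)))); last first.
  move=> i j; rewrite mxE kK /nz_fun.
  case: (p01 i) => ->; first by rewrite mulr0 !mul0r eqxx.
  by rewrite !mul1r !mulr1 mulf_eq0 (negPf k_neq0).
rewrite diag_funZ (@eq_diag_fun _ _ id) => [|i]; last by rewrite kK.
by case: PW => /= _ [_ ->]; rewrite adjmx_tens !tensmx_mul.
Qed.

Definition nz_pow (t : R) : R -> R := nz_fun (fun x => powR x t).

Lemma mxpow_psd_decomp n (M : 'M[C]_n) V s t : psd_decomp M (V, s) ->
  mxpow M t = V *m diag_fun (nz_pow t) s *m adjmx V.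
Proof. exact: mxfun_psd_decomp. Qed.

Lemma mxpow_scale_proj_tens m n (P : 'M[C]_m) (T : 'M[C]_n) k t V s :
  psdmx P -> P *m P = P -> psd_decomp T (V, s) -> 0 < k ->
  mxpow ((k%:C *: P) *t T) t =
  (powR k t)%:C *: (P *t (V *m diag_fun (nz_pow t) s *m adjmx V)).
Proof.
move=> /psdmx_decomp[[W p] PW] PP TV k_gt0.
have s_ge0 : forall i, 0 <= s 0 i by case: TV => _ [].
rewrite /mxpow (mxfun_scale_proj_tens _ PW PP TV k_gt0).
rewrite -tensmxZr scalemxAl scalemxAr scale_diag_fun.
congr (_ *t (_ *m _ *m _)); apply: eq_diag_fun => i; rewrite /nz_pow /nz_fun.
case: ifP => _; first by rewrite mulr0.
by rewrite powRM // ltW.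
Qed.

Lemma psdmx0 n : psdmx (0 : 'M[C]_n).
Proof.
split; first by apply/matrixP => i j; rewrite !mxE rmorph0.
by move=> v; rewrite mulmx0 mul0mx mxE.
Qed.

Lemma psdmxD n (A B : 'M[C]_n) : psdmx A -> psdmx B -> psdmx (A + B).
Proof.
move=> [A_herm A_quad] [B_herm B_quad]; split; first by rewrite adjmxD A_herm B_herm.
by move=> v; rewrite mulmxDr mulmxDl mxE addr_ge0.
Qed.

Lemma psdmx_sum n I (r : seq I) (F : I -> 'M[C]_n) :
  (forall i, psdmx (F i)) -> psdmx (\sum_(i <- r) F i).
Proof. by move=> F_psd; elim/big_ind: _ => //; [exact: psdmx0 | exact: psdmxD]. Qed.

Lemma psdmx_gram n (v : 'cV[C]_n) : psdmx (v *m adjmx v).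
Proof.
split; first by rewrite adjmxM adjmxK.
move=> u; have -> : adjmx u *m (v *m adjmx v) *m u = (adjmx u *m v) *m adjmx (adjmx u *m v).
  by rewrite adjmxM adjmxK !mulmxA.
by rewrite mxE big_ord1 adjmxE mul_conjC_ge0.
Qed.

Lemma psdmx1 n : psdmx (1%:M : 'M[C]_n).
Proof.
split; first exact: adjmx1.
move=> v; rewrite mulmx1 mxE; apply: sumr_ge0 => i _.
by rewrite adjmxE mulrC mul_conjC_ge0.
Qed.

Lemma psdmx_tens m n (A : 'M[C]_m) (B : 'M[C]_n) : psdmx A -> psdmx B -> psdmx (A *t B).
Proof.
move=> /psdmx_decomp[[U l] AU] /psdmx_decomp[[V s] BV].
exact: psd_decomp_psdmx (psd_decomp_tens AU BV).
Qed.

Lemma psdmx_quad_eq0 n (M : 'M[C]_n) (v : 'cV[C]_n) : psdmx M ->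
  (adjmx v *m M *m v) 0 0 = 0 -> M *m v = 0.
Proof.
move=> /psdmx_decomp[[U l] [/= _ [l_ge0 ->]]].
rewrite -[diag_mx _]/(diag_fun id l) -!mulmxA; set y := adjmx U *m v => quad0.
have : (adjmx y *m diag_fun id l *m y) 0 0 = 0.
  by rewrite adjmxM adjmxK !mulmxA -quad0 !mulmxA.
rewrite quad_diag_fun => sum0; clearbody y.
have term0 i : (l 0 i)%:C * (y i 0 * (y i 0)^*) = 0.
  by apply: (psumr_eq0P _ sum0) => // j _; rewrite mulr_ge0 ?lecR ?mul_conjC_ge0.
suff -> : diag_fun id l *m y = 0 by rewrite mulmx0.
apply/matrixP => i j; rewrite ord1 mul_diag_mx [in RHS]mxE !mxE.
by have /eqP := term0 i; rewrite mulf_eq0 mul_conjC_eq0 => /orP[] /eqP ->;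
  rewrite ?mul0r ?mulr0.
Qed.

Lemma tensmx_mul_kronv m n p q (A : 'M[C]_(m, n)) (B : 'M[C]_(p, q)) u v :
  (A *t B) *m kronv u v = kronv (A *m u) (B *m v).
Proof.
apply/matrixP => x z; rewrite ord1; case: (mxtens_indexP x) => i j.
rewrite !mxE mxtens_indexK /= sum_mxtens mulr_suml; apply: eq_bigr => k _.
rewrite mulr_sumr; apply: eq_bigr => l _.
by rewrite tensmxE !mxE mxtens_indexK /=; ring.
Qed.

Lemma adjmx_kronv_mul m n (u u' : 'cV[C]_m) (v v' : 'cV[C]_n) :
  (adjmx (kronv u v) *m kronv u' v') 0 0 =
  (adjmx u *m u') 0 0 * (adjmx v *m v') 0 0.
Proof.
rewrite !mxE sum_mxtens mulr_suml; apply: eq_bigr => i _.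
rewrite mulr_sumr; apply: eq_bigr => j _.
by rewrite !mxE mxtens_indexK /= rmorphM; ring.
Qed.

Lemma kronv_delta m n (x : 'I_m) (k : 'I_n) :
  kronv (delta_mx x 0 : 'cV[C]_m) (delta_mx k 0 : 'cV[C]_n) =
  delta_mx (mxtens_index (x, k)) 0.
Proof.
apply/matrixP => z t; rewrite ord1; case: (mxtens_indexP z) => i j.
rewrite !mxE mxtens_indexK /= mxtens_index_eq.
by case: (i == x); case: (j == k); rewrite ?mulr1 ?mulr0 ?mul0r.
Qed.

Lemma kronvBl m n (u v : 'cV[C]_m) (t : 'cV[C]_n) c :
  kronv (u - c *: v) t = kronv u t - c *: kronv v t.
Proof. by apply/matrixP => z j; rewrite !mxE mulrBl mulrA. Qed.

Lemma quad_delta n (M : 'M[C]_n) z z' :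
  (adjmx (delta_mx z 0 : 'cV[C]_n) *m M *m (delta_mx z' 0 : 'cV[C]_n)) 0 0 = M z z'.
Proof.
rewrite -colE mxE mxE (bigD1 z) //= big1 => [|t /negPf tz].
  by rewrite adjmxE !mxE !eqxx andbT rmorph1 mul1r addr0.
by rewrite adjmxE !mxE tz andFb rmorph0 mul0r.
Qed.

Lemma sum_mul_kronv_delta m n (F : 'I_(m * n) -> C) (u : 'cV[C]_m) (k : 'I_n) :
  \sum_z F z * kronv u (delta_mx k 0) z 0 = \sum_x F (mxtens_index (x, k)) * u x 0.
Proof.
rewrite sum_mxtens; apply: eq_bigr => x _.
rewrite (bigD1 k) //= big1 => [|j /negPf jk]; rewrite !mxE mxtens_indexK /=.
  by rewrite eqxx mulr1 addr0.
by rewrite jk !mulr0.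
Qed.

Lemma sum_adjmx_kronv_delta_mul m n (F : 'I_(m * n) -> C) (u : 'cV[C]_m) (k : 'I_n) :
  \sum_z adjmx (kronv u (delta_mx k 0)) 0 z * F z =
  \sum_x (u x 0)^* * F (mxtens_index (x, k)).
Proof.
rewrite sum_mxtens; apply: eq_bigr => x _.
rewrite (bigD1 k) //= big1 => [|j /negPf jk]; rewrite !mxE mxtens_indexK /=.
  by rewrite eqxx mulr1 addr0.
by rewrite jk mulr0 rmorph0 mul0r.
Qed.

Lemma quad_ptrE a b e (w : 'M[C]_(a * b * e)) (u : 'cV[C]_(a * b)) :
  (adjmx u *m ptrE w *m u) 0 0 =
  \sum_k (adjmx (kronv u (delta_mx k 0)) *m w *m kronv u (delta_mx k 0)) 0 0.
Proof.
under [RHS]eq_bigr do rewrite mxE sum_mul_kronv_delta.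
rewrite exchange_big mxE; apply: eq_bigr => y _; rewrite -mulr_suml; congr (_ * _).
under eq_bigr do rewrite mxE sum_adjmx_kronv_delta_mul.
by rewrite exchange_big mxE; apply: eq_bigr => x _; rewrite !mxE mulr_sumr.
Qed.

Section PureExtension.
Variables (a b e : nat) (phi : 'cV[C]_(a * b)) (w : 'M[C]_(a * b * e)).
Hypotheses (phi_unit : adjmx phi *m phi = 1%:M) (w_psd : psdmx w).
Hypothesis w_marginal : ptrE w = phi *m adjmx phi.

Definition env_state : 'M[C]_e :=
  \matrix_(k, k') (adjmx (kronv phi (delta_mx k 0)) *m w *m kronv phi (delta_mx k' 0)) 0 0.

(* The quadratic form of w at u (x) |k>, summed over k, is that of the marginal
   phi phi^* at u, which vanishes when u is orthogonal to phi. *)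
Lemma ptrE_pure_orth u k : adjmx phi *m u = 0 -> w *m kronv u (delta_mx k 0) = 0.
Proof.
move=> phi_u; apply: psdmx_quad_eq0 => //.
have : (adjmx u *m ptrE w *m u) 0 0 = 0.
  by rewrite w_marginal -!mulmxA phi_u !mulmx0 mxE.
rewrite quad_ptrE => /psumr_eq0P; apply => // k' _.
by case: w_psd => _ ->.
Qed.

Lemma ptrE_pure_tens : w = (phi *m adjmx phi) *t env_state.
Proof.
have w_col y k : w *m kronv (delta_mx y 0) (delta_mx k 0) =
    (phi y 0)^* *: (w *m kronv phi (delta_mx k 0 : 'cV[C]_e)).
  have phi_orth : adjmx phi *m (delta_mx y 0 - (phi y 0)^* *: phi) = 0.
    rewrite mulmxBr -scalemxAr phi_unit; apply/matrixP => i j.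
    by rewrite !ord1 -colE !mxE eqxx mulr1n mulr1 subrr.
  have := ptrE_pure_orth k phi_orth.
  by rewrite kronvBl mulmxBr -scalemxAr => /eqP; rewrite subr_eq0 => /eqP.
have w_herm : adjmx w = w by case: w_psd.
apply: mxtensP => x k' y k.
rewrite -quad_delta -!kronv_delta -mulmxA w_col -scalemxAr mxE mulmxA.
have -> : adjmx (kronv (delta_mx x 0) (delta_mx k' 0)) *m w =
    phi x 0 *: (adjmx (kronv phi (delta_mx k' 0 : 'cV[C]_e)) *m w).
  by rewrite -{1}w_herm -adjmxM w_col adjmxZ conjcK adjmxM w_herm.
rewrite -!scalemxAl mxE tensmxE [env_state _ _]mxE [(phi *m _) x y]mxE big_ord1.
by rewrite adjmxE mulrA [_^* * _]mulrC.
Qed.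

End PureExtension.

Lemma quad_pure_tens m n (phi : 'cV[C]_m) (X : 'M[C]_n) u v :
  adjmx phi *m phi = 1%:M ->
  (adjmx (kronv phi u) *m ((phi *m adjmx phi) *t X) *m kronv phi v) 0 0 =
  (adjmx u *m X *m v) 0 0.
Proof.
move=> phi_unit; rewrite -mulmxA tensmx_mul_kronv -mulmxA phi_unit mulmx1.
by rewrite adjmx_kronv_mul phi_unit mxE eqxx mul1r mulmxA.
Qed.

Lemma psdmx_pure_tensK m n (phi : 'cV[C]_m) (X : 'M[C]_n) :
  adjmx phi *m phi = 1%:M -> psdmx ((phi *m adjmx phi) *t X) -> psdmx X.
Proof.
move=> phi_unit [PX_herm PX_quad]; split; last first.
  by move=> v; rewrite -(quad_pure_tens _ _ _ phi_unit).
apply/matrixP => i j; rewrite -[LHS]quad_delta -(quad_pure_tens _ _ _ phi_unit).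
have -> : (phi *m adjmx phi) *t adjmx X = adjmx ((phi *m adjmx phi) *t X).
  by rewrite adjmx_tens adjmxM adjmxK.
by rewrite PX_herm quad_pure_tens // quad_delta.
Qed.

Definition ptrB a b (M : 'M[C]_(a * b)) : 'M[C]_a :=
  \matrix_(i, i') \sum_(j < b) M (mxtens_index (i, j)) (mxtens_index (i', j)).

Definition ptrA a b (M : 'M[C]_(a * b)) : 'M[C]_b :=
  \matrix_(j, j') \sum_(i < a) M (mxtens_index (i, j)) (mxtens_index (i, j')).

Lemma ptrB_sum a b I (r : seq I) (F : I -> 'M[C]_(a * b)) :
  ptrB (\sum_(i <- r) F i) = \sum_(i <- r) ptrB (F i).
Proof.
apply/matrixP => x y; rewrite summxE mxE; under eq_bigr do rewrite summxE.
by rewrite exchange_big; apply: eq_bigr => i _; rewrite mxE.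
Qed.

Lemma ptrA_sum a b I (r : seq I) (F : I -> 'M[C]_(a * b)) :
  ptrA (\sum_(i <- r) F i) = \sum_(i <- r) ptrA (F i).
Proof.
apply/matrixP => x y; rewrite summxE mxE; under eq_bigr do rewrite summxE.
by rewrite exchange_big; apply: eq_bigr => i _; rewrite mxE.
Qed.

Lemma ptrBZ a b c (M : 'M[C]_(a * b)) : ptrB (c *: M) = c *: ptrB M.
Proof. by apply/matrixP => x y; rewrite !mxE mulr_sumr; apply: eq_bigr => j _; rewrite mxE. Qed.

Lemma ptrAZ a b c (M : 'M[C]_(a * b)) : ptrA (c *: M) = c *: ptrA M.
Proof. by apply/matrixP => x y; rewrite !mxE mulr_sumr; apply: eq_bigr => j _; rewrite mxE. Qed.

Lemma ptrB_kronv a b (u u' : 'cV[C]_a) (v v' : 'cV[C]_b) :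
  ptrB (kronv u v *m adjmx (kronv u' v')) = (adjmx v' *m v) 0 0 *: (u *m adjmx u').
Proof.
apply/matrixP => i j; rewrite !mxE mulr_suml; apply: eq_bigr => k _.
by rewrite !mxE !big_ord1 !mxE !mxtens_indexK /= rmorphM; ring.
Qed.

Lemma ptrA_kronv a b (u u' : 'cV[C]_a) (v v' : 'cV[C]_b) :
  ptrA (kronv u v *m adjmx (kronv u' v')) = (adjmx u' *m u) 0 0 *: (v *m adjmx v').
Proof.
apply/matrixP => i j; rewrite !mxE mulr_suml; apply: eq_bigr => k _.
by rewrite !mxE !big_ord1 !mxE !mxtens_indexK /= rmorphM; ring.
Qed.

Lemma ptrB_ABE_tens a b e (M : 'M[C]_(a * b)) (S : 'M[C]_e) :
  ptrB_ABE (M *t S) = ptrB M *t S.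
Proof.
apply: mxtensP => i k i' k'; rewrite /ptrB_ABE tensmxE !mxE !mxtens_indexK /=.
by rewrite mulr_suml; apply: eq_bigr => j _; rewrite /idx3 tensmxE.
Qed.

Lemma ptrA_ABE_tens a b e (M : 'M[C]_(a * b)) (S : 'M[C]_e) :
  ptrA_ABE (M *t S) = ptrA M *t S.
Proof.
apply: mxtensP => j k j' k'; rewrite /ptrA_ABE tensmxE !mxE !mxtens_indexK /=.
by rewrite mulr_suml; apply: eq_bigr => i _; rewrite /idx3 tensmxE.
Qed.

Lemma ptrA_ABEZ a b e c (M : 'M[C]_(a * b * e)) : ptrA_ABE (c *: M) = c *: ptrA_ABE M.
Proof. by apply/matrixP => x y; rewrite !mxE mulr_sumr; apply: eq_bigr => i _; rewrite mxE. Qed.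

Lemma ptrAB_ABE_tens a b e (M : 'M[C]_(a * b)) (S : 'M[C]_e) :
  ptrAB_ABE (M *t S) = \tr M *: S.
Proof.
apply/matrixP => k k'; rewrite /ptrAB_ABE !mxE /mxtrace mulr_suml.
by apply: eq_bigr => x _; rewrite tensmxE.
Qed.

Lemma ptrE_tens1 a b (M : 'M[C]_(a * b)) (S : 'M[C]_1) : ptrE (M *t S) = S 0 0 *: M.
Proof. by apply/matrixP => x y; rewrite !mxE big_ord1 tensmxE mulrC !ord1. Qed.

Lemma extAE_ABE_tens a b e (M : 'M[C]_a) (S : 'M[C]_e) :
  extAE_ABE b (M *t S) = (M *t 1%:M) *t S.
Proof.
apply: mxtensP => x k y k'.
case: (mxtens_indexP x) => i j; case: (mxtens_indexP y) => i' j'.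
by rewrite /extAE_ABE !tensmxE !mxE !mxtens_indexK /= !tensmxE mulrCA mulrA.
Qed.

Lemma extAE_ABEZ a b e c (M : 'M[C]_(a * e)) :
  extAE_ABE b (c *: M) = c *: extAE_ABE b M.
Proof.
apply/matrixP => x y; rewrite /extAE_ABE !mxE.
case: (mxtens_unindex x) => ij k; case: (mxtens_unindex y) => ij' k'.
case: (mxtens_unindex ij) => i j; case: (mxtens_unindex ij') => i' j'.
by rewrite !mxE mulrCA.
Qed.

Lemma extE_BE_tens b e (S : 'M[C]_e) : extE_BE b S = 1%:M *t S.
Proof. by apply: mxtensP => j k j' k'; rewrite /extE_BE !tensmxE !mxE !mxtens_indexK. Qed.

Lemma orthonormal_vecs_dot n d (f : 'I_d -> 'cV[C]_n) : orthonormal_vecs f ->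
  forall i j, (adjmx (f i) *m f j) 0 0 = (i == j)%:R.
Proof. by move=> f_on i j; rewrite f_on mxE eqxx mulr1n. Qed.

Definition span_proj n d (f : 'I_d -> 'cV[C]_n) : 'M[C]_n := \sum_i f i *m adjmx (f i).

Lemma span_proj_vec n d (f : 'I_d -> 'cV[C]_n) j :
  orthonormal_vecs f -> span_proj f *m f j = f j.
Proof.
move=> f_on; rewrite mulmx_suml (bigD1 j) //= big1 => [|i ij].
  by rewrite -mulmxA f_on eqxx mul_mx_scalar scale1r addr0.
by rewrite -mulmxA f_on (negPf ij) mul_mx_scalar scale0r.
Qed.

Lemma span_proj_idem n d (f : 'I_d -> 'cV[C]_n) :
  orthonormal_vecs f -> span_proj f *m span_proj f = span_proj f.
Proof.
move=> f_on; rewrite {1}/span_proj mulmx_sumr.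
by apply: eq_bigr => i _; rewrite mulmxA span_proj_vec.
Qed.

Lemma psdmx_span_proj n d (f : 'I_d -> 'cV[C]_n) : psdmx (span_proj f).
Proof. by apply: psdmx_sum => i; apply: psdmx_gram. Qed.

Lemma mxtrace_span_proj n d (f : 'I_d -> 'cV[C]_n) :
  orthonormal_vecs f -> \tr (span_proj f) = d%:R.
Proof.
move=> f_on; rewrite /span_proj raddf_sum /= (eq_bigr (fun _ => 1)) ?sumr_const ?card_ord //.
by move=> i _; rewrite mxtrace_mulC f_on eqxx mxtrace_scalar.
Qed.

Lemma nz_pow_conj t s x :
  nz_pow (- t) x * (nz_pow t x * (nz_pow s x * (nz_pow t x * nz_pow (- t) x))) = nz_pow s x.
Proof.
rewrite /nz_pow /nz_fun; case: eqP => [_|/eqP x_neq0]; first by rewrite mul0r.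
have powNK : powR x t * powR x (- t) = 1.
  by rewrite -powRD ?subrr ?powRr0 //; apply/implyP.
have -> : forall p q r : R, q * (p * (r * (p * q))) = (p * q) * (p * q) * r.
  by move=> p q r; ring.
by rewrite powNK !mul1r.
Qed.

Lemma nz_powK t x : 0 < t -> 0 <= x -> nz_pow t^-1 (nz_pow t x) = x.
Proof.
move=> t_gt0 x_ge0; rewrite /nz_pow /nz_fun; have [->|x_neq0] := eqVneq x 0; first by rewrite eqxx.
rewrite gt_eqF ?powR_gt0 ?lt_def ?x_neq0 //.
by rewrite -powRrM mulfV ?gt_eqF // powRr1.
Qed.

Lemma nz_pow_ge0 t x : 0 <= nz_pow t x.
Proof. by rewrite /nz_pow /nz_fun; case: ifP => // _; apply: powR_ge0. Qed.

Lemma renyi_max_ent_scalar (alpha d : R) : 0 < d -> alpha != 0 -> alpha != 1 ->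
  alpha / (alpha - 1) *
    ln (powR (powR d^-1 ((1 - alpha) / 2) * powR d^-1 ((1 - alpha) / 2) * d^-1) alpha^-1 * d)
  = 2 * ln d.
Proof.
move=> d_gt0 alpha_neq0 alpha_neq1.
have dV_gt0 : 0 < d^-1 by rewrite invr_gt0.
have k_gt0 : 0 < powR d^-1 ((1 - alpha) / 2) by rewrite powR_gt0.
rewrite lnM ?posrE ?powR_gt0 ?mulr_gt0 // ln_powR.
rewrite !lnM ?posrE ?mulr_gt0 // !ln_powR lnV ?posrE //.
by field; rewrite alpha_neq0 subr_eq0 alpha_neq1.
Qed.

Lemma scale_tens_sandwich m n (k : C) (Q r : 'M[C]_m) (A B : 'M[C]_n) :
  Q *m r *m Q = r ->
  (k *: (Q *t A)) *m (r *t B) *m (k *: (Q *t A)) = (k * k) *: (r *t (A *m B *m A)).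
Proof. by move=> QrQ; rewrite -!scalemxAl -scalemxAr !tensmx_mul QrQ scalerA. Qed.

Lemma mul_unitary_conj_diag_fun n (V : 'M[C]_n) G1 G2 (l : 'rV[R]_n) :
  adjmx V *m V = 1%:M ->
  (V *m diag_fun G1 l *m adjmx V) *m (V *m diag_fun G2 l *m adjmx V) =
  V *m diag_fun (fun x => G1 x * G2 x) l *m adjmx V.
Proof.
by move=> Vl; rewrite !mulmxA -(mulmxA _ (adjmx V) V) Vl mulmx1 -(mulmxA V) mul_diag_fun.
Qed.

Section MaxEntangled.
Variables (a b d : nat) (fa : 'I_d -> 'cV[C]_a) (fb : 'I_d -> 'cV[C]_b).
Hypotheses (d_gt0 : (0 < d)%N) (fa_on : orthonormal_vecs fa) (fb_on : orthonormal_vecs fb).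

Local Notation phi := (max_ent_vec fa fb).
Local Notation rho := (phi *m adjmx phi).

Lemma natr_d_neq0 : (d%:R : R) != 0.
Proof. by rewrite pnatr_eq0 -lt0n. Qed.

Lemma adjmx_sum_kronv_mul :
  (adjmx (\sum_i kronv (fa i) (fb i)) *m \sum_i kronv (fa i) (fb i)) 0 0 = d%:R.
Proof.
rewrite adjmx_sum mulmx_suml summxE (eq_bigr (fun _ => 1)) ?sumr_const ?card_ord //.
move=> i _; rewrite mulmx_sumr summxE (bigD1 i) //= big1 => [|j ji].
  by rewrite adjmx_kronv_mul !orthonormal_vecs_dot // eqxx mulr1 addr0.
by rewrite adjmx_kronv_mul !orthonormal_vecs_dot // eq_sym (negPf ji) mulr0.
Qed.

Lemma max_ent_vec_normalized : adjmx phi *m phi = 1%:M.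
Proof.
apply/matrixP => i j; rewrite !ord1 adjmxZ -scalemxAl -scalemxAr scalerA mxE.
rewrite adjmx_sum_kronv_mul conjc_real -rmorphM -invfM -expr2 sqr_sqrtr ?ler0n //.
have -> : (d%:R : C) = (d%:R : R)%:C by rewrite rmorph_nat.
by rewrite mxE eqxx mulr1n -rmorphM mulVf ?natr_d_neq0.
Qed.

Lemma max_ent_stateE : rho =
  (d%:R^-1 : R)%:C *: \sum_i \sum_j kronv (fa i) (fb i) *m adjmx (kronv (fa j) (fb j)).
Proof.
rewrite adjmxZ -scalemxAl -scalemxAr scalerA mulrC conjc_real -rmorphM -invfM -expr2.
rewrite sqr_sqrtr ?ler0n // adjmx_sum mulmx_suml; congr (_ *: _).
by apply: eq_bigr => i _; rewrite mulmx_sumr.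
Qed.

Lemma ptrB_max_ent : ptrB rho = (d%:R^-1 : R)%:C *: span_proj fa.
Proof.
rewrite max_ent_stateE ptrBZ ptrB_sum; congr (_ *: _); apply: eq_bigr => i _.
rewrite ptrB_sum (bigD1 i) //= big1 => [|j ji].
  by rewrite ptrB_kronv orthonormal_vecs_dot // eqxx scale1r addr0.
by rewrite ptrB_kronv orthonormal_vecs_dot // (negPf ji) scale0r.
Qed.

Lemma ptrA_max_ent : ptrA rho = (d%:R^-1 : R)%:C *: span_proj fb.
Proof.
rewrite max_ent_stateE ptrAZ ptrA_sum; congr (_ *: _); apply: eq_bigr => i _.
rewrite ptrA_sum (bigD1 i) //= big1 => [|j ji].
  by rewrite ptrA_kronv orthonormal_vecs_dot // eqxx scale1r addr0.
by rewrite ptrA_kronv orthonormal_vecs_dot // (negPf ji) scale0r.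
Qed.

Lemma max_ent_state_idem : rho *m rho = rho.
Proof. by rewrite mulmxA -(mulmxA _ (adjmx _)) max_ent_vec_normalized mulmx1. Qed.

Lemma mxtrace_max_ent_state : \tr rho = 1.
Proof. by rewrite mxtrace_mulC max_ent_vec_normalized mxtrace1. Qed.

Lemma span_proj_tens_max_ent : (span_proj fa *t 1%:M) *m phi = phi.
Proof.
rewrite -scalemxAr mulmx_sumr; congr (_ *: _); apply: eq_bigr => i _.
by rewrite tensmx_mul_kronv span_proj_vec // mul1mx.
Qed.

Lemma span_proj_tens_max_ent_state :
  (span_proj fa *t 1%:M) *m rho *m (span_proj fa *t 1%:M) = rho.
Proof.
rewrite mulmxA span_proj_tens_max_ent -mulmxA; congr (_ *m _).
have P_herm : adjmx (span_proj fa *t (1%:M : 'M[C]_b)) = span_proj fa *t 1%:M.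
  by rewrite adjmx_tens adjmx1; case: (psdmx_span_proj fa) => ->.
by rewrite -{1}P_herm -adjmxM span_proj_tens_max_ent.
Qed.

Section ProductExtension.
Variables (alpha : R) (e : nat) (sigma V : 'M[C]_e) (s : 'rV[R]_e).
Hypotheses (alpha_gt0 : 0 < alpha) (alpha_neq1 : alpha != 1).
Hypothesis sigmaV : psd_decomp sigma (V, s).

Local Notation sigma_pow t := (V *m diag_fun (nz_pow t) s *m adjmx V).
Local Notation omega := (rho *t sigma).

Lemma sigma_eigen_ge0 i : 0 <= s 0 i.
Proof. by case: sigmaV => _ []. Qed.

Lemma sigma_eigvec_unitaryl : adjmx V *m V = 1%:M.
Proof. by case: sigmaV => /unitarymx_adjl. Qed.

Lemma mxpow_ptrB_ABE_max_ent t :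
  mxpow (ptrB_ABE omega) t = (powR d%:R^-1 t)%:C *: (span_proj fa *t sigma_pow t).
Proof.
rewrite ptrB_ABE_tens ptrB_max_ent.
have dV_gt0 : 0 < (d%:R : R)^-1 by rewrite invr_gt0 ltr0n.
exact: mxpow_scale_proj_tens (psdmx_span_proj fa) (span_proj_idem fa_on) sigmaV dV_gt0.
Qed.

Lemma mxpow_max_ent_tens t : mxpow omega t = rho *t sigma_pow t.
Proof.
have -> : omega = ((1 : R)%:C *: rho) *t sigma by rewrite rmorph1 scale1r.
rewrite (mxpow_scale_proj_tens _ (psdmx_gram _) max_ent_state_idem sigmaV ltr01).
by rewrite powR1 rmorph1 scale1r.
Qed.

Lemma mxpow_ptrAB_ABE_max_ent t : mxpow (ptrAB_ABE omega) t = sigma_pow t.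
Proof.
by rewrite ptrAB_ABE_tens mxtrace_max_ent_state scale1r (mxpow_psd_decomp _ sigmaV).
Qed.

Lemma renyi_inner_max_ent :
  let sAE := extAE_ABE b (mxpow (ptrB_ABE omega) ((1 - alpha) / 2)) in
  let sE := extE_BE b (mxpow (ptrAB_ABE omega) ((alpha - 1) / 2)) in
  sE *m ptrA_ABE (sAE *m mxpow omega alpha *m sAE) *m sE =
  (powR d%:R^-1 ((1 - alpha) / 2) * powR d%:R^-1 ((1 - alpha) / 2) * d%:R^-1)%:C *:
    (span_proj fb *t sigma_pow alpha).
Proof.
rewrite /= mxpow_ptrB_ABE_max_ent mxpow_max_ent_tens mxpow_ptrAB_ABE_max_ent.
rewrite extAE_ABEZ extAE_ABE_tens extE_BE_tens.
rewrite (scale_tens_sandwich _ _ _ span_proj_tens_max_ent_state).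
rewrite ptrA_ABEZ ptrA_ABE_tens ptrA_max_ent.
rewrite -scalemxAr -scalemxAl !tensmx_mul mul1mx mulmx1 tensmxZl scalerA -rmorphM.
rewrite -rmorphM !(mul_unitary_conj_diag_fun _ _ _ sigma_eigvec_unitaryl).
rewrite (@eq_diag_fun _ _ (nz_pow alpha)) // => i.
rewrite -[RHS](nz_pow_conj ((1 - alpha) / 2)).
by rewrite (_ : (alpha - 1) / 2 = - ((1 - alpha) / 2)); ring.
Qed.

Lemma renyiCMI_max_ent_tens : \tr sigma = 1 -> renyiCMI alpha omega = 2 * ln (d%:R : R).
Proof.
move=> sigma_tr.
have k_gt0 : 0 < powR d%:R^-1 ((1 - alpha) / 2) * powR d%:R^-1 ((1 - alpha) / 2) * d%:R^-1.
  by rewrite !mulr_gt0 ?powR_gt0 ?invr_gt0 ?ltr0n.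
have sigma_powV : psd_decomp (sigma_pow alpha) (V, \row_i nz_pow alpha (s 0 i)).
  split; first by case: sigmaV.
  split; first by move=> i; rewrite mxE nz_pow_ge0.
  by rewrite /= -[diag_mx _]/(diag_fun id _) diag_fun_map.
have sigmaE : sigma = V *m diag_fun id s *m adjmx V by case: sigmaV => _ [].
rewrite /renyiCMI renyi_inner_max_ent -tensmxZl.
rewrite (mxpow_scale_proj_tens _ (psdmx_span_proj fb) (span_proj_idem fb_on) sigma_powV k_gt0).
rewrite diag_fun_map (@eq_diag_fun _ _ id) => [|i]; last by rewrite /= nz_powK ?sigma_eigen_ge0.
rewrite -sigmaE mxtraceZ mxtrace_tens mxtrace_span_proj // sigma_tr mulr1.
have natCE : (d%:R : C) = (d%:R : R)%:C by rewrite rmorph_nat.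
rewrite natCE -rmorphM /=.
by rewrite renyi_max_ent_scalar ?ltr0n // gt_eqF.
Qed.

End ProductExtension.

Lemma renyiCMI_max_ent_ext alpha e (w : 'M[C]_(a * b * e)) :
  0 < alpha -> alpha != 1 -> densitymx w -> ptrE w = rho ->
  renyiCMI alpha w = 2 * ln (d%:R : R).
Proof.
move=> alpha_gt0 alpha_neq1 [w_psd w_tr] w_marg.
have := ptrE_pure_tens max_ent_vec_normalized w_psd w_marg.
move: (env_state _ _) => sigma w_prod.
have sigma_psd : psdmx sigma.
  by apply: (psdmx_pure_tensK max_ent_vec_normalized); rewrite -w_prod.
have sigma_tr : \tr sigma = 1.
  by rewrite -w_tr w_prod mxtrace_tens mxtrace_max_ent_state mul1r.
have [[V s] sigmaV] := psdmx_decomp sigma_psd.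
by rewrite w_prod (renyiCMI_max_ent_tens alpha_gt0 alpha_neq1 sigmaV).
Qed.

End MaxEntangled.

Lemma renyi_sq_ent_const alpha a b (rho : 'M[C]_(a * b)) c : densitymx rho ->
  (forall e (w : 'M[C]_(a * b * e)), densitymx w -> ptrE w = rho -> renyiCMI alpha w = c) ->
  renyi_sq_ent alpha rho = (2^-1 * c)%:E.
Proof.
move=> [rho_psd rho_tr] CMI_ext; rewrite /renyi_sq_ent EFinM; congr (_ * _)%E.
rewrite -[RHS]ereal_inf1; congr ereal_inf; apply/seteqP; split => x /=.
  by move=> [e [w [w_state [w_marg ->]]]]; rewrite CMI_ext.
move=> ->; pose w := rho *t (1%:M : 'M[C]_1).
have w_state : densitymx w.
  by split; [exact: psdmx_tens rho_psd (psdmx1 _) | rewrite mxtrace_tens rho_tr mxtrace1 mulr1].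
have w_marg : ptrE w = rho by rewrite ptrE_tens1 mxE scale1r.
by exists 1%N, w; rewrite CMI_ext.
Qed.

End RenyiSquashedMaxEnt.

Theorem corollary1 (R : realType) (alpha : R)
  (halpha : (0 < alpha /\ alpha < 1) \/ (1 < alpha /\ alpha <= 2))
  (a b d : nat) (hd : (0 < d)%N)
  (fa : 'I_d -> 'cV[R[i]]_a) (fb : 'I_d -> 'cV[R[i]]_b)
  (hfa : orthonormal_vecs fa) (hfb : orthonormal_vecs fb) :
  let phi := max_ent_vec fa fb in
  renyi_sq_ent alpha (phi *m adjmx phi) = ((ln (d%:R : R))%:E)%E.
Proof.
move=> phi.
have alpha_gt0 : 0 < alpha.
  by case: halpha => [[]|[alpha_gt1 _]] //; exact: lt_trans alpha_gt1.
have alpha_neq1 : alpha != 1.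
  by case: halpha => [[_ /lt_eqF ->]|[/gt_eqF ->]].
have rho_state : densitymx (phi *m adjmx phi).
  by split; [exact: psdmx_gram | exact: mxtrace_max_ent_state].
have CMI_ext e w := renyiCMI_max_ent_ext hd hfa hfb (e := e) (w := w) alpha_gt0 alpha_neq1.
by rewrite (renyi_sq_ent_const rho_state CMI_ext) mulrA mulVf ?mul1r ?pnatr_eq0.
Qed.
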